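(* Let $R$ be a ring and $0\to N'\to N\to P_n\to\cdots\to P_0\to M\to 0$ an exact sequence of $R$-modules in which each $P_i$ is projective and $N'$ and $N$ each have a projective resolution that is eventually finitely generated. Then the partial projective resolution $P_n\to\cdots\to P_0\to M\to 0$ of $M$ can be extended to a projective resolution of $M$ that is eventually finitely generated.
   Context: A resolution $(Q_j)_{j\ge0}$ is eventually finitely generated if $Q_j$ is finitely generated for all sufficiently large $j$. *)

From HB Require Import structures.
From mathcomp Require Import all_boot all_order all_algebra.
Set Implicit Arguments. Unset Strict Implicit. Unset Printing Implicit Defensive.
Import GRing.Theory.
Local Open Scope ring_scope.

Section ModuleDefs.
Variable R : nzRingType.

Definition exact_at (A B C : lmodType R) (f : {linear A -> B})
  (g : {linear B -> C}) : Prop :=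
  forall y : B, g y = 0 <-> exists x : A, f x = y.

Definition lin_injective (A B : lmodType R) (f : {linear A -> B}) : Prop :=
  forall x y : A, f x = f y -> x = y.

Definition lin_surjective (A B : lmodType R) (f : {linear A -> B}) : Prop :=
  forall y : B, exists x : A, f x = y.

Definition projective (P : lmodType R) : Prop :=
  forall (A B : lmodType R) (g : {linear A -> B}) (f : {linear P -> B}),
    lin_surjective g ->
    exists h : {linear P -> A}, forall x, g (h x) = f x.

Definition fin_gen (A : lmodType R) : Prop :=
  exists (n : nat) (v : 'I_n -> A),
    forall x : A, exists c : 'I_n -> R, x = \sum_(i < n) c i *: v i.

Definition eventually_fg (Q : nat -> lmodType R) : Prop :=
  exists m : nat, forall j, (m <= j)%N -> fin_gen (Q j).

Definition has_efg_proj_resolution (M : lmodType R) : Prop :=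
  exists (Q : nat -> lmodType R) (d : forall j, {linear Q j.+1 -> Q j})
         (e : {linear Q 0%N -> M}),
    [/\ forall j, projective (Q j),
        lin_surjective e,
        exact_at (d 0%N) e,
        (forall j, exact_at (d j.+1) (d j))
      & eventually_fg Q].

End ModuleDefs.

From HB Require Import structures.
From mathcomp Require Import all_boot all_order all_algebra zify.
From Stdlib Require Import ClassicalEpsilon.
Set Implicit Arguments. Unset Strict Implicit. Unset Printing Implicit Defensive.
Import GRing.Theory.
Local Open Scope ring_scope.

(* Write N = X (n+2), N' = X (n+3) and i = f (n+2) : N' -> N.  By exactness,
   ker (f n) = im (f (n+1)) = coker i.  Given resolutions A of N and B of N',
   lift i to a chain map phi : B -> A; the mapping cone of phi, with C_0 = A_0
   and C_(k+1) = A_(k+1) (+) B_k, is then a projective resolution of coker i,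
   and it is eventually finitely generated because A and B are.  Splicing it
   onto P_n -> ... -> P_0 -> M -> 0 gives the required resolution of M. *)

Section Exactness.
Variable R : nzRingType.
Implicit Types A B C : lmodType R.

Lemma exact_at_comp0 A B C (g : {linear A -> B}) (u : {linear B -> C}) :
  exact_at g u -> forall x, u (g x) = 0.
Proof. by move=> Hgu x; apply/Hgu; exists x. Qed.

Lemma exact_atI A B C (g : {linear A -> B}) (u : {linear B -> C}) :
  (forall x, u (g x) = 0) -> (forall y, u y = 0 -> exists x, g x = y) ->
  exact_at g u.
Proof. by move=> ug0 keru y; split=> [/keru // | [x <-]]. Qed.

Lemma exact_at_comp_surj A A' B C (e : {linear A' -> A}) (g : {linear A -> B})
  (u : {linear B -> C}) :
  lin_surjective e -> exact_at g u -> exact_at (g \o e) u.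
Proof.
move=> surj_e Hgu; apply: exact_atI => [x | y /Hgu [x <-]].
  exact: exact_at_comp0 Hgu _.
by have [x' <-] := surj_e x; exists x'.
Qed.

End Exactness.

Section Kernel.
Variables (R : nzRingType) (B C : lmodType R) (u : {linear B -> C}).

Definition in_ker (x : B) : bool := u x == 0.

Fact in_ker_submod_closed : GRing.subsemimod_closed in_ker.
Proof.
split; [split|].
- by rewrite unfold_in /in_ker linear0.
- by move=> x y; rewrite !unfold_in /in_ker linearD => /eqP-> /eqP->; rewrite addr0.
- by move=> a x; rewrite !unfold_in /in_ker linearZZ => /eqP->; rewrite scaler0.
Qed.
HB.instance Definition _ := GRing.isSubmodClosed.Build R B in_ker in_ker_submod_closed.

Record ker_mod := KerMod { ker_val :> B; _ : in_ker ker_val }.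
HB.instance Definition _ := [isSub for ker_val].
HB.instance Definition _ := [Choice of ker_mod by <:].
HB.instance Definition _ := [SubChoice_isSubLmodule of ker_mod by <:].

Variables (A : lmodType R) (g : {linear A -> B}) (ug0 : forall x, u (g x) = 0).

Definition corestr_ker (x : A) : ker_mod := KerMod (introT eqP (ug0 x)).

Fact corestr_ker_is_linear : linear corestr_ker.
Proof. by move=> a x y; apply: val_inj; rewrite /= linearP. Qed.
HB.instance Definition _ :=
  GRing.isLinear.Build R A ker_mod *:%R corestr_ker corestr_ker_is_linear.

End Kernel.

(* Projectivity is stated for surjections; apply it to the corestriction
   A -> ker u, which is onto by exactness. *)
Lemma projective_lift_exact (R : nzRingType) (P A B C : lmodType R)
  (g : {linear A -> B}) (u : {linear B -> C}) (f : {linear P -> B}) :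
  projective P -> exact_at g u -> (forall p, u (f p) = 0) ->
  exists h : {linear P -> A}, forall p, g (h p) = f p.
Proof.
move=> projP Hgu uf0.
have surj_g : lin_surjective (corestr_ker (exact_at_comp0 Hgu)).
  by move=> [y Hy]; have /eqP /Hgu [x gx] := Hy; exists x; apply: val_inj.
have [h Hh] := projP _ _ _ (corestr_ker uf0) surj_g.
by exists h => p; have := congr1 val (Hh p).
Qed.

Section Pair.
Variables (R : nzRingType) (U V : lmodType R).

Definition in1 (x : U) : (U * V)%type := (x, 0).
Definition in2 (y : V) : (U * V)%type := (0, y).

Fact in1_is_linear : linear in1.
Proof. by move=> a x y; congr (_, _); rewrite /= scaler0 addr0. Qed.
Fact in2_is_linear : linear in2.
Proof. by move=> a x y; congr (_, _); rewrite /= scaler0 addr0. Qed.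
HB.instance Definition _ := GRing.isLinear.Build R U (U * V)%type *:%R in1 in1_is_linear.
HB.instance Definition _ := GRing.isLinear.Build R V (U * V)%type *:%R in2 in2_is_linear.

Definition copair (W : lmodType R) (p : {linear U -> W}) (q : {linear V -> W}) :
  {linear (U * V)%type -> W} := (p \o fst) \+ (q \o snd).

Definition pairf (W : lmodType R) (p : {linear W -> U}) (q : {linear W -> V})
  (z : W) : (U * V)%type := (p z, q z).

Fact pairf_is_linear W p q : linear (@pairf W p q).
Proof. by move=> a x y; rewrite /pairf !linearP. Qed.
HB.instance Definition _ W p q :=
  GRing.isLinear.Build R W (U * V)%type *:%R (@pairf W p q) (pairf_is_linear p q).

Lemma projective_pair : projective U -> projective V -> projective (U * V)%type.
Proof.
move=> projU projV A B g f surj_g.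
have [h1 Hh1] := projU A B g (f \o in1) surj_g.
have [h2 Hh2] := projV A B g (f \o in2) surj_g.
exists (copair h1 h2) => -[x y].
by rewrite /= linearD Hh1 Hh2 /= -linearD; congr (f (_, _)); rewrite /= ?addr0 ?add0r.
Qed.

Lemma fin_gen_pair : fin_gen U -> fin_gen V -> fin_gen (U * V)%type.
Proof.
move=> [n1 [v1 gen1]] [n2 [v2 gen2]].
exists (n1 + n2)%N,
  (fun k => match split k with inl i => in1 (v1 i) | inr j => in2 (v2 j) end).
move=> [x y]; have [c1 ->] := gen1 x; have [c2 ->] := gen2 y.
exists (fun k => match split k with inl i => c1 i | inr j => c2 j end).
rewrite big_split_ord /=.
under [X in _ = X + _]eq_bigr => i _ do rewrite (unsplitK (inl i : 'I_n1 + 'I_n2)) -linearZ.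
under [X in _ = _ + X]eq_bigr => j _ do rewrite (unsplitK (inr j : 'I_n1 + 'I_n2)) -linearZ.
by rewrite -!linear_sum; congr (_, _); rewrite /= ?addr0 ?add0r.
Qed.

End Pair.

Section ChainMapLift.
Variables (R : nzRingType) (A B : nat -> lmodType R).
Variables (a : forall j, {linear A j.+1 -> A j}) (b : forall j, {linear B j.+1 -> B j}).
Variables (N N' : lmodType R) (ea : {linear A 0%N -> N}) (eb : {linear B 0%N -> N'}).
Variable i : {linear N' -> N}.
Hypotheses (projB : forall j, projective (B j)) (surj_ea : lin_surjective ea).
Hypotheses (exA0 : exact_at (a 0%N) ea) (exA : forall j, exact_at (a j.+1) (a j)).
Hypotheses (eb_b0 : forall y, eb (b 0%N y) = 0) (bb0 : forall j y, b j (b j.+1 y) = 0).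

Definition maps_boundaries_to_cycles j : {linear B j -> A j} -> Prop :=
  match j with
  | 0%N => fun psi => forall y, ea (psi (b 0%N y)) = 0
  | k.+1 => fun psi => forall y, a k (psi (b k.+1 y)) = 0
  end.

Lemma chain_lift_base : exists psi : {linear B 0%N -> A 0%N},
  maps_boundaries_to_cycles psi /\ forall y, ea (psi y) = i (eb y).
Proof.
have [psi Hpsi] := @projB 0%N _ _ ea (i \o eb) surj_ea.
by exists psi; split=> // y; rewrite /= Hpsi /= eb_b0 linear0.
Qed.

Lemma chain_lift_step j (psi : {linear B j -> A j}) : maps_boundaries_to_cycles psi ->
  exists psi' : {linear B j.+1 -> A j.+1},
    maps_boundaries_to_cycles psi' /\ forall y, a j (psi' y) = psi (b j y).
Proof.
case: j psi => [|k] psi /= Hpsi.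
  have [h Hh] := projective_lift_exact (f := psi \o b 0%N) (@projB 1) exA0 Hpsi.
  by exists h; split=> // y; rewrite Hh /= bb0 linear0.
have [h Hh] := projective_lift_exact (f := psi \o b k.+1) (@projB k.+2) (@exA k) Hpsi.
by exists h; split=> // y; rewrite Hh /= bb0 linear0.
Qed.

Lemma chain_map_lift : exists phi : forall j, {linear B j -> A j},
  (forall y, ea (phi 0%N y) = i (eb y)) /\
  (forall j y, a j (phi j.+1 y) = phi j (b j y)).
Proof.
pose state j := {psi : {linear B j -> A j} | maps_boundaries_to_cycles psi}.
have [psi0 [Hpsi0 psi0_i]] := chain_lift_base.
have next j (s : state j) :
    {s' : state j.+1 | forall y, a j (sval s' y) = sval s (b j y)}.
  apply: constructive_indefinite_description.
  have [psi' [Hpsi' Hrel]] := chain_lift_step (svalP s).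
  by exists (exist _ psi' Hpsi').
pose fix lifts j : state j :=
  if j is k.+1 then sval (next k (lifts k)) else exist _ psi0 Hpsi0.
by exists (fun j => sval (lifts j)); split=> // j; exact: svalP (next j (lifts j)).
Qed.

End ChainMapLift.

Section MappingCone.
Variables (R : nzRingType) (A B : nat -> lmodType R).
Variables (a : forall j, {linear A j.+1 -> A j}) (b : forall j, {linear B j.+1 -> B j}).
Variables (N N' : lmodType R) (ea : {linear A 0%N -> N}) (eb : {linear B 0%N -> N'}).
Variables (i : {linear N' -> N}) (phi : forall j, {linear B j -> A j}).
Hypotheses (phi0 : forall y, ea (phi 0%N y) = i (eb y))
  (phiS : forall j y, a j (phi j.+1 y) = phi j (b j y)).
Hypotheses (exA0 : exact_at (a 0%N) ea) (exA : forall j, exact_at (a j.+1) (a j)).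
Hypotheses (exB0 : exact_at (b 0%N) eb) (exB : forall j, exact_at (b j.+1) (b j)).

Definition cone j : lmodType R := if j is k.+1 then (A k.+1 * B k)%type else A 0%N.

Definition cone_d j : {linear cone j.+1 -> cone j} :=
  match j with
  | 0%N => copair (a 0%N) (phi 0%N)
  | k.+1 => pairf (copair (a k.+1) (phi k.+1)) (\- (b k \o snd))
  end.

Lemma cone_d_comp0 j z : cone_d j (cone_d j.+1 z) = 0.
Proof.
have aa0 k x y : a k (a k.+1 x + phi k.+1 y) + phi k (- b k y) = 0.
  by rewrite linearD (exact_at_comp0 (@exA k)) add0r linearN phiS subrr.
case: j z => [|k] [x y]; first exact: aa0.
by congr (_, _); rewrite /= ?aa0 // linearN opprK (exact_at_comp0 (@exB k)).
Qed.

Lemma cone_ker_lift j x y :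
  a j x + phi j (b j y) = 0 -> exists z, cone_d j.+1 z = (x, b j y).
Proof.
rewrite -phiS -linearD => /(@exA j) [x' ax'].
exists (x', - y); congr (_, _) => /=; last by rewrite linearN opprK.
by rewrite ax' linearN addrK.
Qed.

Lemma cone_exact_aug (M : lmodType R) (g : {linear N -> M}) :
  lin_surjective eb -> exact_at i g -> exact_at (cone_d 0%N) (g \o ea).
Proof.
move=> surj_eb exig; apply: exact_atI => [[x y] | c] /=.
  by rewrite linearD (exact_at_comp0 exA0) add0r phi0 (exact_at_comp0 exig).
move=> /exig [w iw]; have [v ebv] := surj_eb w.
have : ea (c - phi 0%N v) = 0 by rewrite linearB phi0 ebv iw subrr.
by move=> /exA0 [x ax]; exists (x, v); rewrite /= ax subrK.
Qed.

Lemma cone_exact : lin_injective i -> forall j, exact_at (cone_d j.+1) (cone_d j).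
Proof.
move=> inj_i j; apply: exact_atI; first exact: cone_d_comp0.
case: j => [|k] [x y] /=.
  move=> dxy0; have phiy : phi 0%N y = - a 0%N x.
    by apply/eqP; rewrite -addr_eq0 addrC; apply/eqP.
  have : i (eb y) = i 0 by rewrite -phi0 phiy linearN (exact_at_comp0 exA0) oppr0 linear0.
  by move=> /inj_i /exB0 [y' def_y]; subst y; apply: cone_ker_lift.
move=> dxy0; have /eqP : - b k y = 0 := congr1 snd dxy0.
rewrite oppr_eq0 => /eqP /(@exB k) [y' def_y]; subst y.
exact: cone_ker_lift (congr1 fst dxy0).
Qed.

Lemma cone_projective : (forall j, projective (A j)) -> (forall j, projective (B j)) ->
  forall j, projective (cone j).
Proof. by move=> projA projB [|k] /=; [exact: projA | exact: projective_pair]. Qed.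

Lemma cone_eventually_fg : eventually_fg A -> eventually_fg B -> eventually_fg cone.
Proof.
move=> [m1 fgA] [m2 fgB]; exists (m1 + m2).+1 => -[|k] //= lt_m_k.
by apply: fin_gen_pair; [apply: fgA | apply: fgB]; lia.
Qed.

End MappingCone.

Theorem mainTheorem9 (R : nzRingType) (n : nat)
  (X : nat -> lmodType R) (f : forall k, {linear X k.+1 -> X k}) :
  (forall i, (i <= n)%N -> projective (X i.+1)) ->
  lin_surjective (f 0%N) ->
  (forall k, (k <= n.+1)%N -> exact_at (f k.+1) (f k)) ->
  lin_injective (f n.+2) ->
  has_efg_proj_resolution (X n.+3) ->
  has_efg_proj_resolution (X n.+2) ->
  exists (Q : nat -> lmodType R) (d : forall j, {linear Q j.+1 -> Q j})
         (e : {linear Q 0%N -> X n.+1}),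
    [/\ forall j, projective (Q j),
        exact_at e (f n),
        exact_at (d 0%N) e,
        (forall j, exact_at (d j.+1) (d j))
      & eventually_fg Q].
Proof.
move=> _ _ exX inj_i [B [b [eb [projB surj_eb exB0 exB fgB]]]].
move=> [A [a [ea [projA surj_ea exA0 exA fgA]]]].
have [phi [phi0 phiS]] := chain_map_lift (f n.+2) projB surj_ea exA0 exA
  (exact_at_comp0 exB0) (fun j => exact_at_comp0 (@exB j)).
exists (cone A B), (cone_d a b phi), (f n.+1 \o ea); split.
- exact: cone_projective.
- exact: exact_at_comp_surj surj_ea (exX n (leqnSn n)).
- exact: (cone_exact_aug b phi0 exA0 surj_eb (exX n.+1 (leqnn _))).
- exact: (cone_exact phi0 phiS exA0 exA exB0 exB inj_i).
- exact: (cone_eventually_fg fgA fgB).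
Qed.
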